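(* (i) For every $n\ge3$, any ortholattice in which the $n$OA law holds is orthomodular. (ii) For every $n\ge3$, there exists an orthomodular lattice in which the $n$OA law fails.
   Context: An ortholattice (OL) is a bounded lattice $(L,\cap,\cup,0,1)$ with a unary operation $'$ satisfying $a''=a$, $a\le b\Rightarrow b'\le a'$, $a\cap a'=0$ and $a\cup a'=1$. An orthomodular lattice (OML) is an OL satisfying: $a\le b$ implies $b=a\cup(a'\cap b)$. Write $a\to b=a'\cup(a\cap b)$. The operation $\overset{(n)}{\equiv}$ on variables $a_1,\dots,a_n$ is defined by $$a_1\overset{(3)}{\equiv}a_2=((a_1\to a_3)\cap(a_2\to a_3))\cup((a_1'\to a_3)\cap(a_2'\to a_3)),$$ $$a_1\overset{(n)}{\equiv}a_2=(a_1\overset{(n-1)}{\equiv}a_2)\cup((a_1\overset{(n-1)}{\equiv}a_n)\cap(a_2\overset{(n-1)}{\equiv}a_n))\quad (n\ge4).$$ In each $(n-1)$-level subexpression only the two displayed variables are substituted; $a_3$ stays the fixed third variable. The $n$OA law is the equation $(a_1\to a_3)\cap(a_1\overset{(n)}{\equiv}a_2)\le a_2\to a_3$, required for all $a_1,\dots,a_n$. *)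

From Stdlib Require Import Arith.

Record OL : Type := {
  car :> Type;
  meet : car -> car -> car;
  join : car -> car -> car;
  zero : car;
  one : car;
  orth : car -> car;
  meetC : forall a b, meet a b = meet b a;
  joinC : forall a b, join a b = join b a;
  meetA : forall a b c, meet a (meet b c) = meet (meet a b) c;
  joinA : forall a b c, join a (join b c) = join (join a b) c;
  meet_absorb : forall a b, meet a (join a b) = a;
  join_absorb : forall a b, join a (meet a b) = a;
  meet1 : forall a, meet a one = a;
  join0 : forall a, join a zero = a;
  orthK : forall a, orth (orth a) = a;
  orth_anti : forall a b, meet a b = a -> meet (orth b) (orth a) = orth b;
  meet_orth : forall a, meet a (orth a) = zero;
  join_orth : forall a, join a (orth a) = one
}.

Arguments meet {o}. Arguments join {o}. Arguments orth {o}.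
Arguments zero {o}. Arguments one {o}.

Definition ole {L : OL} (a b : L) : Prop := meet a b = a.

Definition orthomodular (L : OL) : Prop :=
  forall a b : L, ole a b -> b = join a (meet (orth a) b).

Definition imp {L : OL} (a b : L) : L := join (orth a) (meet a b).

(* eqv a m x y  is  x ≡^(m+3) y, where the variables are a 1, a 2, ..., and
   a 3 is the fixed third variable; at level k>=4 the extra variable is a k. *)
Fixpoint eqv {L : OL} (a : nat -> L) (m : nat) (x y : L) : L :=
  match m with
  | O => join (meet (imp x (a 3)) (imp y (a 3)))
              (meet (imp (orth x) (a 3)) (imp (orth y) (a 3)))
  | S m' => join (eqv a m' x y)
                 (meet (eqv a m' x (a (m + 3))) (eqv a m' y (a (m + 3))))
  end.

Definition nequiv {L : OL} (n : nat) (a : nat -> L) : L := eqv a (n - 3) (a 1) (a 2).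

Definition nOA_law (n : nat) (L : OL) : Prop :=
  forall a : nat -> L,
    ole (meet (imp (a 1) (a 3)) (nequiv n a)) (imp (a 2) (a 3)).

(* Both halves of the theorem rest on one observation: every nOA law contains
   the 3OA law as a substitution instance.  Setting a_k := a_1 for all k >= 4
   makes a_1 ≡^(k) a_1 = 1, so the recursive clause of ≡^(n) collapses and
   a_1 ≡^(n) a_2 becomes the three-variable equivalence a_1 ≡^(3) a_2
   (lemma [nOA_law_OA3]).

   (i) The 3OA law with third variable 0 is, up to De Morgan, exactly the
       orthomodular law: for a <= b it reads a' ∩ (b' ∪ a) <= b'
       (lemma [OA3_orthomodular]).
   (ii) We exhibit a 28-element orthomodular lattice of height 3, given by a
       Greechie diagram of seven three-atom blocks forming two pentagons that
       share two blocks, in which the 3OA law fails; by the observation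
       above, every nOA law fails there too. *)

From Stdlib Require Import List Bool Lia.
Import ListNotations.

Section OrthoLattice.
Variable L : OL.
Implicit Types x y z : L.

Lemma meet_idem x : meet x x = x.
Proof. rewrite <- (join_absorb L x x) at 2. apply meet_absorb. Qed.

Lemma join_idem x : join x x = x.
Proof. rewrite <- (meet_absorb L x x) at 2. apply join_absorb. Qed.

Lemma meet_zero x : meet x zero = zero.
Proof.
  rewrite meetC, <- (join0 L x), joinC at 1. apply meet_absorb.
Qed.

Lemma ole_join_eq x y : ole x y -> join x y = y.
Proof. unfold ole. intro H. rewrite <- H, joinC, meetC. apply join_absorb. Qed.

Lemma ole_antisym x y : ole x y -> ole y x -> x = y.
Proof. unfold ole. intros H1 H2. rewrite <- H1, meetC. exact H2. Qed.

Lemma ole_trans x y z : ole x y -> ole y z -> ole x z.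
Proof. unfold ole. intros H1 H2. rewrite <- H1, <- meetA, H2. reflexivity. Qed.

Lemma ole_one x : ole x one.
Proof. apply meet1. Qed.

Lemma ole_meet_l x y : ole (meet x y) x.
Proof. unfold ole. rewrite meetC, meetA, meet_idem. reflexivity. Qed.

Lemma ole_meet_r x y : ole (meet x y) y.
Proof. unfold ole. rewrite <- meetA, meet_idem. reflexivity. Qed.

Lemma ole_join_l x y : ole x (join x y).
Proof. apply meet_absorb. Qed.

Lemma ole_join_r x y : ole y (join x y).
Proof. rewrite joinC. apply ole_join_l. Qed.

Lemma ole_glb z x y : ole z x -> ole z y -> ole z (meet x y).
Proof. unfold ole. intros H1 H2. rewrite meetA, H1, H2. reflexivity. Qed.

Lemma ole_lub x y z : ole x z -> ole y z -> ole (join x y) z.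
Proof.
  intros Hx Hy. apply ole_join_eq in Hx. apply ole_join_eq in Hy.
  assert (Hz : join (join x y) z = z) by (rewrite <- joinA, Hy, Hx; reflexivity).
  unfold ole. rewrite <- Hz. apply meet_absorb.
Qed.

Lemma ole_orth x y : ole x y -> ole (orth y) (orth x).
Proof. apply orth_anti. Qed.

Lemma ole_orth_rev x y : ole (orth x) (orth y) -> ole y x.
Proof. intro H. apply ole_orth in H. rewrite !orthK in H. exact H. Qed.

Lemma join_one x : join x one = one.
Proof. apply ole_join_eq, ole_one. Qed.

Lemma demorgan_meet x y : orth (meet x y) = join (orth x) (orth y).
Proof.
  apply ole_antisym.
  - apply ole_orth_rev. rewrite orthK. apply ole_glb.
    + apply ole_orth_rev. rewrite orthK. apply ole_join_l.
    + apply ole_orth_rev. rewrite orthK. apply ole_join_r.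
  - apply ole_lub; apply ole_orth; [apply ole_meet_l | apply ole_meet_r].
Qed.

Lemma demorgan_join x y : orth (join x y) = meet (orth x) (orth y).
Proof.
  rewrite <- (orthK L x) at 1. rewrite <- (orthK L y) at 1.
  rewrite <- demorgan_meet, orthK. reflexivity.
Qed.

Definition equiv3 x y z : L :=
  join (meet (imp x z) (imp y z)) (meet (imp (orth x) z) (imp (orth y) z)).

(* x ≡^(3) x = 1, since it lies above x' ∪ x. *)
Lemma equiv3_refl x z : equiv3 x x z = one.
Proof.
  unfold equiv3, imp. rewrite !meet_idem, orthK.
  apply ole_antisym; [apply ole_one|].
  rewrite <- (join_orth L x), joinC. apply ole_lub.
  - eapply ole_trans; [apply ole_join_l | apply ole_join_l].
  - eapply ole_trans; [apply ole_join_l | apply ole_join_r].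
Qed.

Lemma equiv3_sym x y z : equiv3 x y z = equiv3 y x z.
Proof. unfold equiv3. rewrite (meetC L (imp x z)), (meetC L (imp (orth x) z)). reflexivity. Qed.

Lemma eqv_collapse (a : nat -> L) :
  (forall k, 4 <= k -> a k = a 1) ->
  forall m, eqv a m (a 1) (a 1) = one /\
            eqv a m (a 1) (a 2) = equiv3 (a 1) (a 2) (a 3) /\
            eqv a m (a 2) (a 1) = equiv3 (a 1) (a 2) (a 3).
Proof.
  intros Hextra m. induction m as [|m [Hrefl [H12 H21]]].
  - split; [apply equiv3_refl | split; [reflexivity | apply equiv3_sym]].
  - change (eqv a (S m) ?x ?y) with
      (join (eqv a m x y) (meet (eqv a m x (a (S m + 3))) (eqv a m y (a (S m + 3))))).
    rewrite (Hextra (S m + 3)) by lia.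
    rewrite Hrefl, H12, H21, joinC, join_one, meet1, meetC, meet1, join_idem.
    auto.
Qed.

Definition OA3_law : Prop :=
  forall x y z, ole (meet (imp x z) (equiv3 x y z)) (imp y z).

Lemma nOA_law_OA3 n : nOA_law n L -> OA3_law.
Proof.
  intros HnOA x y z.
  set (a := fun k => match k with 2 => y | 3 => z | _ => x end).
  assert (Hextra : forall k, 4 <= k -> a k = a 1).
  { intros [|[|[|[|k]]]] Hk; [lia | lia | lia | lia | reflexivity]. }
  specialize (HnOA a). unfold nequiv in HnOA.
  destruct (eqv_collapse a Hextra (n - 3)) as [_ [Hcollapse _]].
  rewrite Hcollapse in HnOA. exact HnOA.
Qed.

(* With third variable 0, the 3OA law for a <= b says a' ∩ (b' ∪ a) <= b',
   whose complement is the orthomodular identity b = a ∪ (a' ∩ b). *)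
Lemma OA3_orthomodular : OA3_law -> orthomodular L.
Proof.
  intros HOA x y Hxy.
  specialize (HOA x y zero).
  unfold equiv3, imp in HOA. rewrite !meet_zero, !join0, !orthK in HOA.
  assert (Hyx : meet (orth x) (orth y) = orth y).
  { rewrite meetC. apply orth_anti. exact Hxy. }
  rewrite Hyx, Hxy in HOA.
  assert (Hkey : meet (orth x) (join (orth y) x) = orth y).
  { apply ole_antisym; [exact HOA|].
    apply ole_glb; [rewrite <- Hyx; apply ole_meet_l | apply ole_join_l]. }
  apply (f_equal orth) in Hkey.
  rewrite orthK, demorgan_meet, demorgan_join, !orthK in Hkey.
  rewrite meetC. symmetry. exact Hkey.
Qed.

End OrthoLattice.

(** A finite orthomodular lattice violating 3OA.  Its atoms are A1..A13 and
    its blocks (maximal Boolean subalgebras, each with three atoms) are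
      {1,2,3} {1,4,5} {5,6,7} {6,8,9} {2,8,10} {10,11,12} {7,11,13}.
    The elements are 0, 1, the atoms and their orthocomplements (coatoms). *)

Inductive atom : Type := A1 | A2 | A3 | A4 | A5 | A6 | A7 | A8 | A9 | A10 | A11 | A12 | A13.
Scheme Equality for atom.

Inductive greechie : Type := Bot | Top | At (i : atom) | Coat (i : atom).
Scheme Equality for greechie.

Definition atoms : list atom := [A1; A2; A3; A4; A5; A6; A7; A8; A9; A10; A11; A12; A13].

Definition blocks : list (atom * atom * atom) :=
  [(A1, A2, A3); (A1, A4, A5); (A5, A6, A7); (A6, A8, A9);
   (A2, A8, A10); (A10, A11, A12); (A7, A11, A13)].

Definition in_block (i : atom) (B : atom * atom * atom) : bool :=
  let '(p, q, r) := B in atom_beq i p || atom_beq i q || atom_beq i r.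

Definition perp (i j : atom) : bool :=
  negb (atom_beq i j) && existsb (fun B => in_block i B && in_block j B) blocks.

Definition g_orth (x : greechie) : greechie :=
  match x with
  | Bot => Top | Top => Bot | At i => Coat i | Coat i => At i
  end.

(* The atoms below the coatoms i' and j' are those orthogonal to both i and j;
   in this diagram there is at most one. *)
Definition coat_meet (i j : atom) : greechie :=
  if atom_beq i j then Coat i
  else match find (fun k => perp k i && perp k j) atoms with
       | Some k => At k
       | None => Bot
       end.

Definition g_meet (x y : greechie) : greechie :=
  match x, y with
  | Bot, _ | _, Bot => Bot
  | Top, y => y
  | x, Top => x
  | At i, At j => if atom_beq i j then At i else Bot
  | At i, Coat j | Coat j, At i => if perp i j then At i else Bot
  | Coat i, Coat j => coat_meet i j
  end.

Definition g_join (x y : greechie) : greechie := g_orth (g_meet (g_orth x) (g_orth y)).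

Definition elements : list greechie :=
  Bot :: Top :: map At atoms ++ map Coat atoms.

Lemma elements_complete x : In x elements.
Proof. destruct x as [| |i|i]; try destruct i; simpl; tauto. Qed.

Definition geqb (x y : greechie) : bool := if greechie_eq_dec x y then true else false.

Lemma geqb_eq x y : geqb x y = true -> x = y.
Proof. unfold geqb. destruct (greechie_eq_dec x y); [trivial | discriminate]. Qed.

Lemma geqb_refl x : geqb x x = true.
Proof. unfold geqb. destruct (greechie_eq_dec x x); [reflexivity | contradiction]. Qed.

Lemma check_all (p : greechie -> bool) : forallb p elements = true -> forall x, p x = true.
Proof. rewrite forallb_forall. intros H x. apply H, elements_complete. Qed.

Lemma check_all2 (p : greechie -> greechie -> bool) :
  forallb (fun x => forallb (p x) elements) elements = true -> forall x y, p x y = true.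
Proof. intros H x. apply check_all, (check_all _ H x). Qed.

Lemma check_all3 (p : greechie -> greechie -> greechie -> bool) :
  forallb (fun x => forallb (fun y => forallb (p x y) elements) elements) elements = true ->
  forall x y z, p x y z = true.
Proof. intros H x. apply check_all2, (check_all _ H x). Qed.

Ltac by_enumeration :=
  first [ apply check_all3 | apply check_all2 | apply check_all ];
  vm_compute; reflexivity.

Lemma g_meetC x y : g_meet x y = g_meet y x.
Proof. apply geqb_eq. revert x y. by_enumeration. Qed.
Lemma g_joinC x y : g_join x y = g_join y x.
Proof. apply geqb_eq. revert x y. by_enumeration. Qed.
Lemma g_meetA x y z : g_meet x (g_meet y z) = g_meet (g_meet x y) z.
Proof. apply geqb_eq. revert x y z. by_enumeration. Qed.
Lemma g_joinA x y z : g_join x (g_join y z) = g_join (g_join x y) z.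
Proof. apply geqb_eq. revert x y z. by_enumeration. Qed.
Lemma g_meet_absorb x y : g_meet x (g_join x y) = x.
Proof. apply geqb_eq. revert x y. by_enumeration. Qed.
Lemma g_join_absorb x y : g_join x (g_meet x y) = x.
Proof. apply geqb_eq. revert x y. by_enumeration. Qed.
Lemma g_meet1 x : g_meet x Top = x.
Proof. destruct x; reflexivity. Qed.
Lemma g_join0 x : g_join x Bot = x.
Proof. destruct x; reflexivity. Qed.
Lemma g_orthK x : g_orth (g_orth x) = x.
Proof. destruct x; reflexivity. Qed.
Lemma g_meet_orth x : g_meet x (g_orth x) = Bot.
Proof. apply geqb_eq. revert x. by_enumeration. Qed.
Lemma g_join_orth x : g_join x (g_orth x) = Top.
Proof. apply geqb_eq. revert x. by_enumeration. Qed.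

Lemma g_orth_anti x y : g_meet x y = x -> g_meet (g_orth y) (g_orth x) = g_orth y.
Proof.
  assert (Hcheck : forall x y, implb (geqb (g_meet x y) x)
                     (geqb (g_meet (g_orth y) (g_orth x)) (g_orth y)) = true)
    by by_enumeration.
  intro Hxy. apply geqb_eq. specialize (Hcheck x y).
  rewrite Hxy, geqb_refl in Hcheck. exact Hcheck.
Qed.

Definition Greechie7 : OL := {|
  car := greechie; meet := g_meet; join := g_join; zero := Bot; one := Top;
  orth := g_orth;
  meetC := g_meetC; joinC := g_joinC; meetA := g_meetA; joinA := g_joinA;
  meet_absorb := g_meet_absorb; join_absorb := g_join_absorb;
  meet1 := g_meet1; join0 := g_join0; orthK := g_orthK;
  orth_anti := g_orth_anti; meet_orth := g_meet_orth; join_orth := g_join_orth |}.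

Lemma Greechie7_orthomodular : orthomodular Greechie7.
Proof.
  assert (Hcheck : forall x y, implb (geqb (g_meet x y) x)
                     (geqb y (g_join x (g_meet (g_orth x) y))) = true)
    by by_enumeration.
  intros x y Hxy. apply geqb_eq. specialize (Hcheck x y).
  unfold ole in Hxy. simpl in Hxy. rewrite Hxy, geqb_refl in Hcheck. exact Hcheck.
Qed.

(* For x = A6, y = A8, z = A1': x -> z = A6', y -> z = A8' and x ≡^(3) y = 1,
   but A6' is not below A8'. *)
Lemma Greechie7_not_OA3 : ~ OA3_law Greechie7.
Proof.
  intro HOA. specialize (HOA (At A6) (At A8) (Coat A1)).
  unfold ole in HOA. vm_compute in HOA. discriminate HOA.
Qed.

Theorem theorem4p4 :
  (forall (n : nat), 3 <= n -> forall L : OL, nOA_law n L -> orthomodular L) /\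
  (forall (n : nat), 3 <= n -> exists L : OL, orthomodular L /\ ~ nOA_law n L).
Proof.
  split.
  - intros n _ L HnOA. apply OA3_orthomodular, (nOA_law_OA3 L n), HnOA.
  - intros n _. exists Greechie7. split.
    + exact Greechie7_orthomodular.
    + intro HnOA. exact (Greechie7_not_OA3 (nOA_law_OA3 Greechie7 n HnOA)).
Qed.
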